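(* If there exists an ${}^\alpha\mathrm{H}_t(m,n;s,k)$, then for every positive divisor $\lambda$ of $t$ there exists a ${}^{\lambda\alpha}\mathrm{H}_{t/\lambda}(m,n;s,k)$. More precisely, if $A$ is an ${}^\alpha\mathrm{H}_t(m,n;s,k)$ over $\mathbb{Z}_v$ with $v=\frac{2nk}{\alpha}+t$, then the array obtained from $A$ by reducing every entry modulo $\frac{v}{\lambda}$ (i.e. applying the natural projection $\mathbb{Z}_v\to\mathbb{Z}_{v/\lambda}$) is a ${}^{\lambda\alpha}\mathrm{H}_{t/\lambda}(m,n;s,k)$ over $\mathbb{Z}_{v/\lambda}$.
   Context: For positive integers $m,n,s,k,\lambda,t$ with $t$ dividing $\frac{2nk}{\lambda}$, let $v=\frac{2nk}{\lambda}+t$ and $J$ the subgroup of $\mathbb{Z}_v$ of order $t$. A $\lambda$-fold Heffter array over $\mathbb{Z}_v$ relative to $J$, denoted ${}^\lambda\mathrm{H}_t(m,n;s,k)$, is an $m\times n$ partially filled array with entries in $\mathbb{Z}_v$ such that: (a) each row has exactly $s$ and each column exactly $k$ filled cells; (b) the multiset $\{\pm x: x$ an entry of a filled cell$\}$ (counted over all filled cells) contains each element of $\mathbb{Z}_v\setminus J$ exactly $\lambda$ times and no element of $J$; (c) every row and every column sums to $0$ in $\mathbb{Z}_v$. (When $\lambda=1$ this is a relative Heffter array $\mathrm{H}_t(m,n;s,k)$.) *)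

From mathcomp Require Import all_boot.
Set Implicit Arguments. Unset Strict Implicit. Unset Printing Implicit Defensive.

(* A partially filled m x n array with entries in Z_v: an empty cell is None,
   a filled cell is Some x, where x : nat is the canonical representative
   (0 <= x < v) of an element of Z_v. *)
Definition parr (m n : nat) := 'I_m -> 'I_n -> option nat.

Definition entry m n (A : parr m n) i j : nat := odflt 0 (A i j).

(* multiplicity of the residue y (0 <= y < v) in the multiset
   { x, -x : x entry of a filled cell } taken in Z_v *)
Definition pm_count (v : nat) m n (A : parr m n) (y : nat) : nat :=
  \sum_(i < m) \sum_(j < n)
    match A i j with
    | Some x => ((x %% v) == y) + (((v - x %% v) %% v) == y)
    | None => 0
    end.

(* J = the subgroup of Z_v of order t, i.e. the multiples of v/t (t | v). *)
Definition inJ (v t y : nat) : bool := (v %/ t) %| y.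

Definition heffter_over (lam v t m n s k : nat) (A : parr m n) : Prop :=
  (forall i j x, A i j = Some x -> x < v) /\
  [/\ (forall i : 'I_m, #|[pred j : 'I_n | A i j != None]| = s),
      (forall j : 'I_n, #|[pred i : 'I_m | A i j != None]| = k),
      (forall y, y < v -> pm_count v A y = if inJ v t y then 0 else lam),
      (forall i : 'I_m, (\sum_(j < n) entry A i j) %% v = 0)
    & (forall j : 'I_n, (\sum_(i < m) entry A i j) %% v = 0)].

Definition hv (lam t n k : nat) : nat := (2 * n * k) %/ lam + t.

Definition lheffter (lam t m n s k : nat) (A : parr m n) : Prop :=
  [/\ 0 < m, 0 < n, 0 < s, 0 < k & 0 < lam /\ 0 < t] /\
  [/\ lam %| 2 * n * k, t %| (2 * n * k) %/ lam &
      @heffter_over lam (hv lam t n k) t m n s k A].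

Definition reduce (w : nat) m n (A : parr m n) : parr m n :=
  fun i j => omap (fun x => x %% w) (A i j).

From mathcomp Require Import all_boot.

(* Let v = w * lam and t = a * lam with a | w, so that the subgroup J of
   order t in Z_v maps onto the subgroup of order a in Z_w under the
   projection pi : Z_v -> Z_w.  Every residue y of Z_w has exactly lam lifts
   y + c*w (c < lam) in Z_v, all of them lying in J or all outside J.  Since
   pi commutes with negation, the multiplicity of y in {+-x : x in pi(A)}
   is the sum of the multiplicities of its lam lifts in {+-x : x in A}:
   it is 0 on pi(J) and lam * alpha elsewhere.  Row and column sums are
   preserved by pi, and so is the pattern of filled cells. *)

Lemma residue_indicator_lifts {w lam z y : nat} : 0 < w -> z < w * lam -> y < w ->
  ((z %% w == y) : nat) = \sum_(c < lam) ((z == y + c * w) : nat).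
Proof.
move=> w_gt0 z_lt y_lt.
have q_lt : z %/ w < lam by rewrite ltn_divLR // mulnC.
rewrite (bigD1 (Ordinal q_lt)) //= big1 ?addn0.
  case: eqP => [<-|ne]; first by rewrite {1}(divn_eq z w) addnC eqxx.
  case: eqP => // ez; exfalso; apply: ne.
  by rewrite ez addnC modnMDl modn_small.
move=> c /negP ne_c; case: eqP => // ez; exfalso; apply: ne_c.
apply/eqP/val_inj => /=.
by rewrite ez addnC divnMDl // divn_small // addn0.
Qed.

Lemma reduce_opp {v w x : nat} : 0 < w -> w %| v -> x < v ->
  ((v - x) %% v) %% w = (w - x %% w) %% w.
Proof.
move=> w_gt0 wv xv.
rewrite (modn_dvdm _ wv); apply/eqP.
rewrite -(eqn_modDr x) subnK ?(ltnW xv) //.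
by rewrite -modnDmr subnK ?(ltnW (ltn_pmod x w_gt0)) // modnn.
Qed.

Lemma pm_count_reduce {w lam m n : nat} {A : parr m n} {y : nat} : 0 < w ->
  (forall i j x, A i j = Some x -> x < w * lam) -> y < w ->
  pm_count w (reduce w A) y = \sum_(c < lam) pm_count (w * lam) A (y + c * w).
Proof.
move=> w_gt0 A_lt y_lt; rewrite /pm_count [RHS]exchange_big.
apply: eq_bigr => i _; rewrite [RHS]exchange_big; apply: eq_bigr => j _.
rewrite /reduce; case Aij: (A i j) => [x|] /=; last by rewrite big1.
have x_lt := A_lt _ _ _ Aij.
have opp_lt : (w * lam - x) %% (w * lam) < w * lam.
  by rewrite ltn_pmod // (leq_ltn_trans _ x_lt).
rewrite (modn_small x_lt) big_split /= -(residue_indicator_lifts w_gt0 x_lt y_lt).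
rewrite -(residue_indicator_lifts w_gt0 opp_lt y_lt) modn_mod.
by rewrite (reduce_opp w_gt0 (dvdn_mulr _ (dvdnn w)) x_lt).
Qed.

(* Membership in J only depends on the ratio v/t of orders. *)
Lemma inJ_scale (w a lam y : nat) : 0 < lam ->
  inJ (w * lam) (a * lam) y = inJ w a y.
Proof. by move=> lam_gt0; rewrite /inJ divnMr. Qed.

Lemma inJ_lift (w a y c : nat) : a %| w -> inJ w a (y + c * w) = inJ w a y.
Proof. by move=> aw; rewrite /inJ dvdn_addl // dvdn_mull // dvdn_div. Qed.

Lemma reduce_filled (w m n : nat) (A : parr m n) i j :
  (reduce w A i j != None) = (A i j != None).
Proof. by rewrite /reduce; case: (A i j). Qed.

Lemma entry_reduce (w m n : nat) (A : parr m n) i j :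
  entry (reduce w A) i j = entry A i j %% w.
Proof. by rewrite /entry /reduce; case: (A i j) => //=; rewrite mod0n. Qed.

Lemma sum_reduce_mod0 (w lam : nat) (I : finType) (F : I -> nat) :
  (\sum_i F i) %% (w * lam) = 0 -> (\sum_i F i %% w) %% w = 0.
Proof.
move=> sum0; have := congr1 (modn^~ w) sum0.
by rewrite /= (modn_dvdm _ (dvdn_mulr lam (dvdnn w))) mod0n modn_summ.
Qed.

Lemma heffter_over_reduce (alpha lam w a m n s k : nat) (A : parr m n) :
  0 < lam -> 0 < w -> a %| w ->
  heffter_over alpha (w * lam) (a * lam) s k A ->
  heffter_over (lam * alpha) w a s k (reduce w A).
Proof.
move=> lam_gt0 w_gt0 aw [A_lt [rows cols count rsum csum]].
split.
  by move=> i j x; rewrite /reduce; case: (A i j) => //= x0 [<-]; rewrite ltn_pmod.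
split.
- by move=> i; rewrite -(rows i); apply: eq_card => j; rewrite !inE reduce_filled.
- by move=> j; rewrite -(cols j); apply: eq_card => i; rewrite !inE reduce_filled.
- move=> y y_lt; rewrite (pm_count_reduce w_gt0 A_lt y_lt).
  have lift_lt (c : 'I_lam) : y + c * w < w * lam.
    have : y + c * w < w + c * w by rewrite ltn_add2r.
    by move/leq_trans; apply; rewrite -mulSn mulnC leq_pmul2l.
  rewrite (eq_bigr (fun _ => if inJ w a y then 0 else alpha)) => [|c _].
    by rewrite sum_nat_const card_ord; case: (inJ w a y); rewrite ?muln0.
  by rewrite count // inJ_scale // inJ_lift.
- by move=> i; under eq_bigr do rewrite entry_reduce; exact: sum_reduce_mod0.
- by move=> j; under eq_bigr do rewrite entry_reduce; exact: sum_reduce_mod0.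
Qed.

Lemma hv_split {alpha t n k lam : nat} :
  0 < alpha -> 0 < lam -> alpha %| 2 * n * k ->
  t %| (2 * n * k) %/ alpha -> lam %| t ->
  [/\ lam * alpha %| 2 * n * k,
      t %/ lam %| (2 * n * k) %/ (lam * alpha)
    & hv alpha t n k = hv (lam * alpha) (t %/ lam) n k * lam].
Proof.
move=> alpha_gt0 lam_gt0 alpha_dvd /dvdnP [b qE] /dvdnP [a tE].
have nkE : 2 * n * k = b * a * (lam * alpha).
  by rewrite -(divnK alpha_dvd) qE tE !mulnA.
have ta : t %/ lam = a by rewrite tE mulnK.
have quotE : (2 * n * k) %/ (lam * alpha) = b * a.
  by rewrite nkE mulnK // muln_gt0 lam_gt0.
split; first by rewrite nkE dvdn_mull.
  by rewrite quotE ta dvdn_mull.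
by rewrite /hv quotE ta qE tE !mulnA mulnDl.
Qed.

Theorem theorem4p4 (alpha t m n s k lam : nat) (A : parr m n) :
  @lheffter alpha t m n s k A ->
  0 < lam -> lam %| t ->
  @lheffter (lam * alpha) (t %/ lam) m n s k
    (reduce (hv alpha t n k %/ lam) A).
Proof.
move=> [[m_gt0 n_gt0 s_gt0 k_gt0 [alpha_gt0 t_gt0]] [alpha_dvd t_dvd HA]] lam_gt0 lam_dvd.
have [alpha'_dvd t'_dvd hvE] := hv_split alpha_gt0 lam_gt0 alpha_dvd t_dvd lam_dvd.
have tE : t = t %/ lam * lam by rewrite divnK.
have t'_gt0 : 0 < t %/ lam by rewrite divn_gt0 // dvdn_leq.
set w := hv (lam * alpha) (t %/ lam) n k in hvE *.
have w_gt0 : 0 < w by rewrite /w /hv ltn_addl.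
have t'_w : t %/ lam %| w by rewrite /w /hv dvdn_addr.
rewrite hvE mulnK //; split.
  by split => //; rewrite muln_gt0 lam_gt0.
split => //; apply: heffter_over_reduce => //.
by rewrite -tE -hvE.
Qed.
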